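(* Let $\Sigma$ be an alphabet with $|\Sigma|\ge 3$ and $f\colon\Sigma^*\to\Sigma^*$ RCP. Then exactly one of the following holds: ($C_1$) there exists $b\in\Sigma$ such that $f(x)\in b\Sigma^*$ for all $x\in\Sigma^*$; ($C_2$) $f(x)\in x\Sigma^*$ for all $x\in\Sigma^*$; ($C_3$) $f(x)=\varepsilon$ for all $x\in\Sigma^*$.
   Context: $\Sigma^*$ is the free monoid over $\Sigma$ (finite words, concatenation, empty word $\varepsilon$). For a word $w$, $w\Sigma^*$ denotes the set of words having $w$ as a prefix. A function $f\colon(\Sigma^* )^k\to\Sigma^*$ is RCP if for every monoid morphism $\varphi\colon\Sigma^*\to\Sigma^*$ and all $u_1,\ldots,u_k,v_1,\ldots,v_k$ with $\varphi(u_i)=\varphi(v_i)$ for all $i$, we have $\varphi(f(u_1,\ldots,u_k))=\varphi(f(v_1,\ldots,v_k))$. *)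

From mathcomp Require Import all_boot.
Set Implicit Arguments. Unset Strict Implicit. Unset Printing Implicit Defensive.

Definition is_monoid_morphism (T : Type) (phi : seq T -> seq T) : Prop :=
  phi [::] = [::] /\ forall u v : seq T, phi (u ++ v) = phi u ++ phi v.

Definition RCP1 (T : Type) (f : seq T -> seq T) : Prop :=
  forall phi : seq T -> seq T, is_monoid_morphism phi ->
  forall u v : seq T, phi u = phi v -> phi (f u) = phi (f v).

Definition has_prefix (T : Type) (p w : seq T) : Prop :=
  exists r : seq T, w = p ++ r.

Definition exactly_one3 (P Q R : Prop) : Prop :=
  [/\ P, ~ Q & ~ R] \/ [/\ ~ P, Q & ~ R] \/ [/\ ~ P, ~ Q & R].

From mathcomp Require Import all_boot.
Set Implicit Arguments. Unset Strict Implicit. Unset Printing Implicit Defensive.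

(* An RCP function is a word in one variable x: f w = t[x := w] for a fixed
   template t.  On letters this comes from renaming morphisms: identifying y
   with z (and with a third letter e) forces every position of f [:: y] to be
   either a constant letter or y itself.  Longer words reduce to shorter ones
   by induction: a word is determined by its images under the two erasing
   morphisms of its first two letters a, b and under the substitutions
   c |-> ab, c \notin {a, b}, and w = a b v has the same image under
   c |-> ab as the shorter word c v.  Finally the three cases are read off the
   first symbol of t: none (C3), a letter (C1) or the variable (C2). *)

Section Templates.

Variable T : Type.

(* A template is a word over T extended by a variable, encoded as [None]. *)
Definition subst_word (t : seq (option T)) (w : seq T) : seq T :=
  flatten [seq if o is Some a then [:: a] else w | o <- t].

Lemma subst_word1 t y : subst_word t [:: y] = map (odflt y) t.
Proof. by elim: t => //= -[a|] t IH; rewrite -IH. Qed.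

Lemma morph_subst_word (phi : seq T -> seq T) t v w :
  is_monoid_morphism phi -> phi v = phi w ->
  phi (subst_word t v) = phi (subst_word t w).
Proof.
move=> [_ phiM] Evw; elim: t => //= o t IH.
rewrite /subst_word /= !phiM -!/(subst_word t _) IH.
by case: o => [a|]; rewrite ?Evw.
Qed.

Lemma RCP1_subst_word (f : seq T -> seq T) phi t v w :
  RCP1 f -> is_monoid_morphism phi -> f v = subst_word t v -> phi v = phi w ->
  phi (f w) = phi (subst_word t w).
Proof.
move=> rcp_f phiM fv Evw.
by rewrite -(rcp_f phi phiM v w Evw) fv; apply: morph_subst_word.
Qed.

Lemma map_monoid_morphism (r : T -> T) : is_monoid_morphism (map r).
Proof. by split => // u v; rewrite map_cat. Qed.

Lemma filter_monoid_morphism (p : pred T) : is_monoid_morphism (filter p).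
Proof. by split => // u v; rewrite filter_cat. Qed.

Lemma flatten_map_monoid_morphism (g : T -> seq T) :
  is_monoid_morphism (fun w => flatten (map g w)).
Proof. by split => // u v; rewrite map_cat flatten_cat. Qed.

End Templates.

Lemma size_filter_predC1_lt (T : eqType) (z : T) (s : seq T) :
  z \in s -> size (filter (predC1 z) s) < size s.
Proof.
move=> zs; rewrite size_filter -(count_predC (predC1 z) s) -[X in X < _]addn0.
by rewrite ltn_add2l -has_count; apply/hasP; exists z; rewrite //= eqxx.
Qed.

Definition rename (T : eqType) (z y : T) (x : T) : T := if x == z then y else x.

Lemma rename_eq_cases (T : eqType) (z y p q : T) : rename z y p = rename z y q ->
  p = q \/ (p = y /\ q = z) \/ (p = z /\ q = y).
Proof. by rewrite /rename; case: eqP => [->|_]; case: eqP => [->|_]; auto. Qed.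

Lemma rename_agree (T : eqType) (y z e p q s : T) :
  y != z -> y != e -> z != e ->
  rename z y p = rename z y q -> rename e y p = rename e y s ->
  rename e z q = rename e z s ->
  p = q \/ (p = y /\ q = z).
Proof.
move=> yz ye ze /rename_eq_cases [->|[[-> ->]|[-> ->]]]; auto.
move=> /rename_eq_cases [?|[[? ?]|[? ?]]] /rename_eq_cases [?|[[? ?]|[? ?]]]; subst;
  by rewrite ?eqxx in yz ye ze *.
Qed.

Lemma template_letter (T : eqType) (c d y p q r : T) : c != d ->
  r = p \/ (r = y /\ p = c) -> r = q \/ (r = y /\ q = d) ->
  p = q \/ (p = c /\ q = d) ->
  r = odflt y (if p == q then Some p else None).
Proof.
move=> cd [?|[? ?]] [?|[? ?]] [?|[? ?]]; subst;
  by rewrite ?eqxx ?(negbTE cd) //; rewrite eqxx in cd.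
Qed.

Section ThreeLetters.

Variable T : finType.
Hypothesis card_T : 3 <= #|T|.

Lemma exists_letter : exists c : T, c \in T.
Proof. by apply/card_gt0P; apply: leq_trans card_T. Qed.

Lemma exists_neq2 (a b : T) : exists c, (c != a) && (c != b).
Proof.
apply/existsP; apply: contraLR card_T => /existsPn no_c.
have: #|T| <= #|[set a; b]|.
  apply/subset_leq_card/subsetP => x _; rewrite !inE.
  by move: (no_c x); rewrite negb_and !negbK.
by rewrite cards2 -leqNgt => /leq_trans; apply; case: (a != b).
Qed.

Lemma filter_predC1_inj (x y : seq T) :
  (forall a, filter (predC1 a) x = filter (predC1 a) y) -> x = y.
Proof.
elim: x y => [|p x IH] [|q y] Efilter //.
- have [a /andP[aq _]] := exists_neq2 q q.
  by move: (Efilter a) => /=; rewrite [q == a]eq_sym aq.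
- have [a /andP[ap _]] := exists_neq2 p p.
  by move: (Efilter a) => /=; rewrite [p == a]eq_sym ap.
have [a /andP[ap aq]] := exists_neq2 p q.
move: (Efilter a) => /=; rewrite ![_ == a]eq_sym ap aq => -[Epq _].
subst q; congr (_ :: _).
by apply: IH => b; move: (Efilter b) => /=; case: ifP => // _ [].
Qed.

Definition expand2 (a b c : T) (x : T) : seq T :=
  if x == c then [:: a; b] else [:: x].

Lemma expand2_inj (a b : T) (x y : seq T) :
  filter (predC1 a) x = filter (predC1 a) y ->
  filter (predC1 b) x = filter (predC1 b) y ->
  (forall c, c != a -> c != b ->
     flatten (map (expand2 a b c) x) = flatten (map (expand2 a b c) y)) ->
  x = y.
Proof.
elim: x y => [|p x IH] [|q y] Ea Eb Ec //;
  try by have [c /andP[ca cb]] := exists_neq2 a b;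
         move: (Ec c ca cb); rewrite /= /expand2; case: ifP.
have Epq : p = q.
  have head_in d : filter (predC1 d) (p :: x) = filter (predC1 d) (q :: y) ->
      p != q -> (p == d) || (q == d).
    move=> Ed; apply: contraR; rewrite negb_or => /andP[pd qd].
    by move: Ed => /=; rewrite pd qd => -[->]; rewrite eqxx.
  apply/eqP; apply: contraT => pq.
  have /orP pqa := head_in a Ea pq; have /orP pqb := head_in b Eb pq.
  have [c /andP[cp cq]] := exists_neq2 p q.
  have [ca cb] : c != a /\ c != b.
    by split; [case: pqa | case: pqb] => /eqP <-.
  move: (Ec c ca cb); rewrite /= /expand2 eq_sym (negbTE cp) eq_sym (negbTE cq).
  by move=> [Epq]; rewrite Epq eqxx in pq.
subst q; congr (_ :: _); apply: IH.
- by move: Ea => /=; case: ifP => // _ [].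
- by move: Eb => /=; case: ifP => // _ [].
move=> c ca cb; move/eqP: (Ec c ca cb).
by rewrite /= eqseq_cat // => /andP[_ /eqP].
Qed.

End ThreeLetters.

Section RCPLetters.

Variables (T : finType) (f : seq T -> seq T).
Hypotheses (card_T : 3 <= #|T|) (rcp_f : RCP1 f).

Lemma f_letter_rename (y z : T) :
  y != z -> map (rename z y) (f [:: z]) = map (rename z y) (f [:: y]).
Proof.
move=> yz; apply: rcp_f; first exact: map_monoid_morphism.
by rewrite /= /rename eqxx (negbTE yz).
Qed.

Lemma size_f_letter (y z : T) : size (f [:: y]) = size (f [:: z]).
Proof.
case: (y =P z) => [-> //|/eqP yz].
by have := congr1 size (f_letter_rename yz); rewrite !size_map.
Qed.

Lemma f_letter_agree (x0 y z : T) i :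
  nth x0 (f [:: y]) i = nth x0 (f [:: z]) i \/
  (nth x0 (f [:: y]) i = y /\ nth x0 (f [:: z]) i = z).
Proof.
case: (y =P z) => [-> | /eqP yz]; first by left.
case: (ltnP i (size (f [:: x0]))) => ltis; last first.
  by left; rewrite !nth_default // (size_f_letter _ x0).
have [e /andP[ey ez]] := exists_neq2 card_T y z.
have nth_rename a b : a != b ->
    rename b a (nth x0 (f [:: b]) i) = rename b a (nth x0 (f [:: a]) i).
  move=> ab; have := congr1 (fun s => nth (rename b a x0) s i) (f_letter_rename ab).
  by rewrite /= !(nth_map x0) // (size_f_letter _ x0).
have ye : y != e by rewrite eq_sym.
have ze : z != e by rewrite eq_sym.
exact: rename_agree yz ye ze
  (esym (nth_rename _ _ yz)) (esym (nth_rename _ _ ye)) (esym (nth_rename _ _ ze)).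
Qed.

Lemma f_letter_template :
  exists t, forall y : T, f [:: y] = subst_word t [:: y].
Proof.
have [c _] := exists_letter card_T.
have [d /andP[dc _]] := exists_neq2 card_T c c.
(* The variable occurs exactly where f [:: c] and f [:: d] differ. *)
exists [seq if pq.1 == pq.2 then Some pq.1 else None | pq <- zip (f [:: c]) (f [:: d])].
move=> y; rewrite subst_word1 -map_comp.
have Ecd := size_f_letter c d.
apply: (@eq_from_nth _ c).
  by rewrite size_map size_zip Ecd minnn (size_f_letter y d).
move=> i lti.
rewrite (nth_map (c, c)) ?size_zip -?Ecd ?minnn -?(size_f_letter y c) //.
rewrite nth_zip //=; apply: template_letter (f_letter_agree _ _ _ _)
  (f_letter_agree _ _ _ _) (f_letter_agree _ _ _ _).
by rewrite eq_sym.
Qed.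

Lemma f_subst_word t :
  (forall y : T, f [:: y] = subst_word t [:: y]) ->
  forall w, f w = subst_word t w.
Proof.
move=> f_letter w; have [n ltwn] := ubnP (size w).
elim: n w ltwn => // n IH [|a [|b v]] ltwn; last set w := [:: a, b & v].
- apply: (filter_predC1_inj card_T) => a.
  apply: RCP1_subst_word rcp_f (filter_monoid_morphism _) (f_letter a) _.
  by rewrite /= eqxx.
- exact: f_letter.
have erase z : z \in w ->
    filter (predC1 z) (f w) = filter (predC1 z) (subst_word t w).
  move=> zw; apply: RCP1_subst_word rcp_f (filter_monoid_morphism _) (IH _ _) _.
    by apply: leq_trans (size_filter_predC1_lt zw) _; rewrite -ltnS.
  exact: filter_id.
apply: (expand2_inj card_T (erase a _) (erase b _)); rewrite ?inE ?eqxx ?orbT //.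
move=> c ca cb.
apply: RCP1_subst_word rcp_f (flatten_map_monoid_morphism _) (IH (c :: v) ltwn) _.
by rewrite /= /expand2 eqxx ![_ == c]eq_sym (negbTE ca) (negbTE cb).
Qed.

Lemma RCP1_template : exists t, forall w, f w = subst_word t w.
Proof.
have [t f_letter] := f_letter_template.
by exists t; apply: f_subst_word.
Qed.

End RCPLetters.

Lemma exactly_one3_intro (P Q R : Prop) :
  P \/ Q \/ R -> (P -> ~ Q) -> (P -> ~ R) -> (Q -> ~ R) -> exactly_one3 P Q R.
Proof.
move=> [p|[q|r]] pq pr qr; [left | right; left | right; right];
  by split=> // h; firstorder.
Qed.

Theorem mainTheorem10 (T : finType) (f : seq T -> seq T) :
  3 <= #|T| -> RCP1 f ->
  exactly_one3
    (exists b : T, forall x : seq T, has_prefix [:: b] (f x))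
    (forall x : seq T, has_prefix x (f x))
    (forall x : seq T, f x = [::]).
Proof.
move=> card_T rcp_f; apply: exactly_one3_intro.
- have [t f_t] := RCP1_template card_T rcp_f.
  case: t f_t => [|[b|] t] f_t.
  + by right; right => x; rewrite f_t.
  + by left; exists b => x; exists (subst_word t x); rewrite f_t.
  + by right; left => x; exists (subst_word t x); rewrite f_t.
- move=> [b f_b] f_x; have [c /andP[cb _]] := exists_neq2 card_T b b.
  have [r1 E1] := f_b [:: c]; have [r2] := f_x [:: c].
  by rewrite E1 => -[bc]; rewrite bc eqxx in cb.
- by move=> [b f_b] f_nil; have [r] := f_b [::]; rewrite f_nil.
- have [c _] := exists_letter card_T.
  by move=> f_x f_nil; have [r] := f_x [:: c]; rewrite f_nil.
Qed.
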